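(* Suppose there exists $\alpha>0$ such that $G_{ii}=\alpha$ for all $i\in\{1,\dots,p\}$. Then the function $F(u):=p\log\big(\sum_{i=1}^pe^{(Bu)_i}G_{ii}\big)-\sum_{i=1}^p(Bu)_i$ on $\mathbb{R}^H$ admits $u=0$ as its unique minimizer; consequently the associated rescaling matrix $\mathrm{diag}(\exp(Bu))$ is the identity.
   Context: $\mathcal G=(V,E)$ is a finite DAG; input neurons have no incoming edges, output neurons no outgoing edges, hidden neurons $\mathcal H$ ($H=|\mathcal H|$) are the rest. $\theta\in\mathbb{R}^p$ consists of one weight per edge and one bias $b_v$ per non-input neuron $v$. For $h\in\mathcal H$, $\mathrm{in}_h$ = indices of $b_h$ and of weights of edges entering $h$, $\mathrm{out}_h$ = indices of weights of edges leaving $h$. $B\in\mathbb{R}^{p\times H}$ has $B_{ih}=-1$ if $i\in\mathrm{in}_h$, $1$ if $i\in\mathrm{out}_h$, $0$ otherwise. $G=\partial\Phi(\theta)^\top\partial\Phi(\theta)$ where $\Phi:\mathbb{R}^p\to\mathbb{R}^q$ is the path-lifting: for each path $v_0\to\cdots\to v_d$ along edges ending at an output neuron (for $d=0$, $v_0$ non-input), the coordinate is the product of the weights along the path, times $b_{v_0}$ if $v_0$ is not an input neuron. *)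

From HB Require Import structures.
From mathcomp Require Import all_boot all_order all_algebra.
From mathcomp Require Import all_classical all_reals all_analysis.
Set Implicit Arguments. Unset Strict Implicit. Unset Printing Implicit Defensive.
Import Order.TTheory GRing.Theory Num.Theory.
Local Open Scope ring_scope.

Definition is_input (V : finType) (e : rel V) (v : V) : bool :=
  [forall w, ~~ e w v].
Definition is_output (V : finType) (e : rel V) (v : V) : bool :=
  [forall w, ~~ e v w].
Definition is_hidden (V : finType) (e : rel V) (v : V) : bool :=
  ~~ is_input e v && ~~ is_output e v.

Definition dag_acyclic (V : finType) (e : rel V) : Prop :=
  forall x y, e x y -> ~~ connect e y x.

(* Parameter indices: (Some w, v) = weight of edge w -> v;
   (None, v) = bias b_v of a non-input neuron v. *)
Definition is_param (V : finType) (e : rel V) (x : option V * V) : bool :=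
  match x.1 with
  | Some w => e w x.2
  | None => ~~ is_input e x.2
  end.

Definition param (V : finType) (e : rel V) : finType :=
  {x : option V * V | is_param e x}.
Definition hidden (V : finType) (e : rel V) : finType :=
  {v : V | is_hidden e v}.

(* value of a parameter given by its "raw" index (0 if not a parameter) *)
Definition thetaE (R : realType) (V : finType) (e : rel V)
  (theta : param e -> R) (x : option V * V) : R :=
  odflt 0 (omap theta (@insub _ (is_param e) (param e) x)).

Definition validpath (V : finType) (e : rel V) (s : seq V) : bool :=
  match s with
  | [::] => false
  | v0 :: s' => [&& path e v0 s', is_output e (last v0 s')
                 & (s' != [::]) || ~~ is_input e v0]
  end.

(* coordinate of the path-lifting Phi(theta) for the path s *)
Definition pathval (R : realType) (V : finType) (e : rel V)
  (theta : param e -> R) (s : seq V) : R :=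
  match s with
  | [::] => 0
  | v0 :: s' =>
      (\prod_(ab <- zip s s') thetaE theta (Some ab.1, ab.2)) *
      (if is_input e v0 then 1 else thetaE theta (None, v0))
  end.

Definition dpath (R : realType) (V : finType) (e : rel V)
  (theta : param e -> R) (s : seq V) (i : param e) : R :=
  derive1 (fun t : R => pathval (fun j => theta j + (if j == i then t else 0)) s) 0.

(* G = dPhi(theta)^T dPhi(theta); paths in a DAG have at most #|V| vertices,
   so they are enumerated as tuples of length d.+1 with d < #|V|. *)
Definition Gmat (R : realType) (V : finType) (e : rel V)
  (theta : param e -> R) (i j : param e) : R :=
  \sum_(d < #|V|) \sum_(t : (d.+1).-tuple V | validpath e t)
     dpath theta t i * dpath theta t j.

Definition Bmat (R : realType) (V : finType) (e : rel V)
  (i : param e) (h : hidden e) : R :=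
  if (val i).2 == val h then -1
  else if (val i).1 == Some (val h) then 1
  else 0.

Definition Bu (R : realType) (V : finType) (e : rel V)
  (u : hidden e -> R) (i : param e) : R :=
  \sum_h Bmat R i h * u h.

Definition Fobj (R : realType) (V : finType) (e : rel V)
  (theta : param e -> R) (u : hidden e -> R) : R :=
  #|param e|%:R * ln (\sum_i expR (Bu u i) * Gmat theta i i)
  - \sum_i Bu u i.

From HB Require Import structures.
From mathcomp Require Import all_boot all_order all_algebra.
From mathcomp Require Import all_classical all_reals all_analysis.
Import Order.TTheory GRing.Theory Num.Theory.
Set Implicit Arguments.
Unset Strict Implicit.
Unset Printing Implicit Defensive.

Local Open Scope ring_scope.

(* With a constant diagonal alpha, F(u) = p ln (alpha * sum_i e^(x_i)) - sum_i x_i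
   for x = Bu, and the AM-GM inequality applied to the e^(x_i) gives
   F(u) >= p ln (alpha p) = F(0), with equality iff Bu is constant.  The bias of
   an output neuron is not touched by B, so that constant is 0; and the bias of
   a hidden neuron h is only touched through u_h, whence u = 0. *)

Lemma ln_sum_expR_leif (R : realType) (I : finType) (a : R) (x : I -> R) : 0 < a ->
  #|I|%:R * ln (a * #|I|%:R) <= #|I|%:R * ln (a * \sum_i expR (x i)) - \sum_i x i
  ?= iff [forall i, forall j, x i == x j].
Proof.
move=> a_gt0; set n := #|I|; set mu := (\sum_i expR (x i)) / n%:R.
have [n0 | n_gt0] := posnP n.
  rewrite n0 !mul0r add0r big_pred0 ?oppr0; last exact: card0_eq.
  by apply/leif_refl/forallP => i; have := card0_eq n0 i.
have mu_gt0 : 0 < mu.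
  rewrite divr_gt0 ?ltr0n // (bigD1 (enum_default (Ordinal n_gt0))) //=.
  by rewrite ltr_wpDr ?expR_gt0 ?sumr_ge0 // => i _; rewrite expR_ge0.
have := @leif_AGM _ I I (fun i => expR (x i)) (fun i _ => expR_ge0 (x i)).
rewrite -/n -/mu -expR_sum -(lnK mu_gt0) -expRM_natl (mono_leif (@ler_expR R)).
have -> : [forall i in I, forall j in I, expR (x i) == expR (x j)] =
          [forall i, forall j, x i == x j].
  by apply/eq_forallb => i; apply/eq_forallb => j; rewrite (inj_eq (@expR_inj R)).
have -> : a * \sum_i expR (x i) = a * n%:R * mu.
  by rewrite /mu -mulrA [_%:R * _]mulrC divfK // pnatr_eq0 -lt0n.
rewrite [ln (_ * mu)]lnM ?posrE ?(mulr_gt0 a_gt0) ?ltr0n // => AGM.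
by rewrite leifBRL mulrDr; apply: leifD (elimT (leif_refl _ _) isT) AGM.
Qed.

Lemma exists_non_input_output (V : finType) (e : rel V) (v : V) :
  dag_acyclic e -> ~~ is_input e v -> exists2 y, ~~ is_input e y & is_output e y.
Proof.
move=> acyc v_in.
(* A non-input descendant of v with the fewest descendants has no successor. *)
pose P y := connect e v y && ~~ is_input e y.
have Pv : P v by rewrite /P connect0.
case: (arg_minnP (fun y => #|[set z | connect e y z]|) Pv) => y /andP[vy y_in] ymin.
exists y => //; apply/forallP => z; apply/negP => yz.
have Pz : P z.
  by rewrite /P (connect_trans vy (connect1 yz)); apply/forallP => /(_ y); rewrite yz.
have := ymin z Pz; apply/negP; rewrite -ltnNge; apply: proper_card; apply/properP; split.
  by apply/fintype.subsetP => w; rewrite !inE; apply: connect_trans (connect1 yz).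
by exists y; rewrite !inE ?connect0 ?acyc.
Qed.

Section PathLiftingRescaling.
Variables (R : realType) (V : finType) (e : rel V).

Definition bias_param (v : V) (v_in : ~~ is_input e v) : param e :=
  exist _ (None, v) v_in.

Lemma hidden_non_input (h : hidden e) : ~~ is_input e (val h).
Proof. by case/andP: (valP h). Qed.

Lemma Bu0 (i : param e) : Bu (fun _ : hidden e => 0 : R) i = 0.
Proof. by rewrite /Bu big1 // => h _; rewrite mulr0. Qed.

Lemma Bu_bias_hidden (u : hidden e -> R) (h : hidden e) :
  Bu u (bias_param (hidden_non_input h)) = - u h.
Proof.
rewrite /Bu (bigD1 h) //= /Bmat eqxx mulN1r big1 ?addr0 // => h' h'h /=.
by rewrite (inj_eq val_inj) eq_sym (negbTE h'h) mul0r.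
Qed.

Lemma Bu_bias_output (u : hidden e -> R) (y : V) (y_in : ~~ is_input e y) :
  is_output e y -> Bu u (bias_param y_in) = 0.
Proof.
move=> y_out; rewrite /Bu big1 // => h _ /=; rewrite /Bmat /=.
case: eqP => [yh | _]; last by rewrite mul0r.
by move: (valP h); rewrite /= -yh /is_hidden y_out andbF.
Qed.

Lemma Fobj_const_diag (theta : param e -> R) (alpha : R) (u : hidden e -> R) :
  (forall i, Gmat theta i i = alpha) ->
  Fobj theta u = #|param e|%:R * ln (alpha * \sum_i expR (Bu u i)) - \sum_i Bu u i.
Proof.
move=> G_alpha; rewrite /Fobj mulr_sumr; congr (_ * ln _ - _).
by apply: eq_bigr => i _; rewrite G_alpha mulrC.
Qed.

Lemma Fobj0_const_diag (theta : param e -> R) (alpha : R) :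
  (forall i, Gmat theta i i = alpha) ->
  Fobj theta (fun _ => 0) = #|param e|%:R * ln (alpha * #|param e|%:R).
Proof.
move=> G_alpha; rewrite (Fobj_const_diag _ G_alpha) (eq_bigr (fun=> 1)) => [|i _].
  by rewrite sumr_const big1 ?subr0 // => i _; apply: Bu0.
by rewrite Bu0 expR0.
Qed.

End PathLiftingRescaling.

Theorem propositionJ1 (R : realType) (V : finType) (e : rel V)
  (Hacyc : dag_acyclic e) (theta : param e -> R) (alpha : R)
  (Halpha : 0 < alpha) (HG : forall i : param e, Gmat theta i i = alpha) :
  (forall u : hidden e -> R, Fobj theta (fun _ => 0) <= Fobj theta u) /\
  (forall u : hidden e -> R,
     (forall v : hidden e -> R, Fobj theta u <= Fobj theta v) ->
     u = (fun _ => 0) /\ (forall i : param e, expR (Bu u i) = 1)).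
Proof.
have F_leif (u : hidden e -> R) : Fobj theta (fun _ => 0) <= Fobj theta u
    ?= iff [forall i, forall j, Bu u i == Bu u j].
  by rewrite (Fobj0_const_diag HG) (Fobj_const_diag _ HG); apply: ln_sum_expR_leif.
split=> [u | u u_min]; first exact: F_leif.
have /forallP Bu_const : [forall i, forall j, Bu u i == Bu u j].
  by rewrite -(F_leif u).2 eq_le (F_leif u) u_min.
have u0 : u = (fun _ => 0).
  apply: funext => h.
  have [y y_in y_out] := exists_non_input_output Hacyc (hidden_non_input h).
  apply/eqP; rewrite -oppr_eq0 -Bu_bias_hidden (eqP (forallP (Bu_const _) (bias_param y_in))).
  by rewrite Bu_bias_output.
by split=> // i; rewrite u0 Bu0 expR0.
Qed.
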